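(* Let $X,Y$ be finite sets, $u:X\times Y\to\mathbb{R}$, $\rho\in\Delta(X)$ and $\phi\in\Delta(Y)$. A joint distribution $\gamma\in\Delta(X\times Y)$ with $X$-marginal $\rho$ and $Y$-marginal $\phi$ is the unique solution to the optimal transport problem \[\max_{\gamma'\in\Delta(X\times Y)}\sum_{x,y}u(x,y)\gamma'(x,y)\quad\text{s.t. }\gamma'\text{ has }X\text{-marginal }\rho\text{ and }Y\text{-marginal }\phi\] if and only if its support $\mathrm{supp}(\gamma)\subset X\times Y$ is strictly $u$-cyclically monotone.
   Context: A set $S\subset X\times Y$ is strictly $u$-cyclically monotone if for every finite collection of pairs $\{(x_i,y_i)\}_{i=1}^N\subset S$ such that the set $\{(x_i,y_i)\}_{i=1}^N$ differs from the set $\{(x_i,y_{i+1})\}_{i=1}^N$ (with the convention $y_{N+1}=y_1$), one has $\sum_{i=1}^Nu(x_i,y_i)>\sum_{i=1}^Nu(x_i,y_{i+1})$. *)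

From mathcomp Require Import all_boot all_order all_algebra.
From mathcomp Require Import reals.
Set Implicit Arguments. Unset Strict Implicit. Unset Printing Implicit Defensive.
Import Order.TTheory GRing.Theory Num.Theory.
Local Open Scope ring_scope.

Section OT.
Variable R : realType.

Definition is_dist (T : finType) (p : {ffun T -> R}) : Prop :=
  (forall t, 0 <= p t) /\ \sum_(t : T) p t = 1.

Variables X Y : finType.

Definition has_marginals (g : {ffun X * Y -> R}) (rho : {ffun X -> R})
  (phi : {ffun Y -> R}) : Prop :=
  (forall x, \sum_(y : Y) g (x, y) = rho x) /\
  (forall y, \sum_(x : X) g (x, y) = phi y).

Definition ot_feasible (rho : {ffun X -> R}) (phi : {ffun Y -> R})
  (g : {ffun X * Y -> R}) : Prop := is_dist g /\ has_marginals g rho phi.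

Definition ot_value (u : X -> Y -> R) (g : {ffun X * Y -> R}) : R :=
  \sum_(p : X * Y) u p.1 p.2 * g p.

Definition ot_optimal (u : X -> Y -> R) rho phi (g : {ffun X * Y -> R}) : Prop :=
  ot_feasible rho phi g /\
  forall g', ot_feasible rho phi g' -> ot_value u g' <= ot_value u g.

Definition ot_unique_solution (u : X -> Y -> R) rho phi
  (g : {ffun X * Y -> R}) : Prop :=
  ot_optimal u rho phi g /\ forall g', ot_optimal u rho phi g' -> g' = g.

Definition supp (g : {ffun X * Y -> R}) : pred (X * Y) :=
  [pred p | g p != 0].

(* the shifted collection (x_i, y_{i+1}), with y_{N+1} = y_1 *)
Definition cyc_shift (s : seq (X * Y)) : seq (X * Y) :=
  zip (map fst s) (rot 1 (map snd s)).

Definition strictly_cyc_monotone (u : X -> Y -> R) (S : pred (X * Y)) : Prop :=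
  forall s : seq (X * Y),
    all (fun p => S p) s ->
    ~ (s =i cyc_shift s) ->
    \sum_(p <- cyc_shift s) u p.1 p.2 < \sum_(p <- s) u p.1 p.2.

End OT.

From mathcomp Require Import all_boot all_order all_algebra.
From mathcomp Require Import reals ring.
Import Order.TTheory GRing.Theory Num.Theory.
Set Implicit Arguments. Unset Strict Implicit. Unset Printing Implicit Defensive.
Local Open Scope ring_scope.

(* Moving a mass e from each pair (x_i, y_i) of a finite family to the shifted
   pair (x_i, y_{i+1}) preserves both marginals and changes the transport value
   by e times the cyclic gap sum_i u(x_i, y_{i+1}) - sum_i u(x_i, y_i).  If the
   support of the unique solution gamma contained a family with nonnegative gap,
   such a transfer with e small enough would give another feasible plan that is
   at least as good.
   Conversely, for a feasible gamma' <> gamma, D = gamma' - gamma has null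
   marginals and is negative only on supp gamma.  Walking alternately from a
   row to a positive entry and from its column to a negative entry closes a
   cycle with D < 0 on its pairs and D > 0 on the shifted pairs.  Undoing a
   transfer of the smallest |D| along it zeroes one entry of D without changing
   any sign, and the value of D is that of the smaller D' plus a negative
   multiple of the gap, so induction on the support gives
   value gamma' < value gamma. *)

Lemma exists_periodic_iter (T : finType) (f : T -> T) (x : T) :
  exists i k, [/\ (0 < k)%N, iter k f (iter i f x) = iter i f x
                & uniq (traject f (iter i f x) k)].
Proof.
have /trajectP[i lt_i_n iter_n] := looping_order f x.
exists i, (order f x - i)%N; split; first by rewrite subn_gt0.
  by rewrite -iterD subnK ?iter_n // ltnW.
have := orbit_uniq f x; rewrite /orbit -{1}(subnKC (ltnW lt_i_n)) trajectD.
by rewrite cat_uniq => /and3P[_ _ ->].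
Qed.

Lemma map_traject_periodic (T : Type) (f : T -> T) (x : T) n :
  iter n f x = x -> map f (traject f x n) = rot 1 (traject f x n).
Proof.
have mapE y m : map f (traject f y m) = traject f (f y) m.
  by elim: m y => //= m IH y; rewrite IH.
case: n => // n fnx.
by rewrite mapE [in RHS]trajectS rot1_cons trajectSr -iterSr fnx.
Qed.

Lemma rot1_zip (A B : Type) (a : seq A) (b : seq B) :
  size a = size b -> rot 1 (zip a b) = zip (rot 1 a) (rot 1 b).
Proof.
by case: a b => [|x a] [|y b] //= [size_ab]; rewrite !rot1_cons zip_rcons.
Qed.

Lemma exists_gt0_of_sum_eq0 (R : realDomainType) (I : finType) (F : I -> R) i :
  \sum_j F j = 0 -> F i < 0 -> exists j, 0 < F j.
Proof.
move=> sumF0 Fi_lt0; have [j Fj_gt0 | F_le0] := pickP (fun j => 0 < F j).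
  by exists j.
have NF_ge0 j : true -> 0 <= - F j by rewrite oppr_ge0 leNgt F_le0.
have sumNF0 : \sum_j - F j = 0 by rewrite sumrN sumF0 oppr0.
by have /eqP := psumr_eq0P NF_ge0 sumNF0 (i := i) isT; rewrite oppr_eq0 lt_eqF.
Qed.

Lemma exists_lt0_of_sum_eq0 (R : realDomainType) (I : finType) (F : I -> R) i :
  \sum_j F j = 0 -> 0 < F i -> exists j, F j < 0.
Proof.
move=> sumF0 Fi_gt0; have sumNF0 : \sum_j - F j = 0 by rewrite sumrN sumF0 oppr0.
have NFi_lt0 : - F i < 0 by rewrite oppr_lt0.
by have [j] := exists_gt0_of_sum_eq0 sumNF0 NFi_lt0; rewrite oppr_gt0; exists j.
Qed.

Lemma exists_ge0_perturbation (R : realFieldType) (T : finType) (g h : T -> R) :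
  (forall t, 0 <= g t) -> (forall t, h t < 0 -> 0 < g t) ->
  exists2 e, 0 < e & forall t, 0 <= g t + e * h t.
Proof.
move=> g_ge0 g_gt0; pose e := \big[Order.min/1]_(t | h t < 0) (g t / - h t).
have e_gt0 : 0 < e.
  by apply/bigmin_gtP; split=> // t h_lt0; rewrite divr_gt0 ?g_gt0 ?oppr_gt0.
exists e => // t; have [h_lt0 | h_ge0] := ltP (h t) 0; last first.
  by rewrite addr_ge0 // mulr_ge0 // ltW.
have : e <= g t / - h t by apply: bigmin_le_cond.
by rewrite ler_pdivlMr ?oppr_gt0 // mulrN -subr_ge0 opprK.
Qed.

Section Multiplicity.
Variables (R : pzSemiRingType) (T : finType).

Definition multiplicity (s : seq T) (t : T) : R := (count_mem t s)%:R.

Lemma multiplicity_cons a s t :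
  multiplicity (a :: s) t = (a == t)%:R + multiplicity s t.
Proof. by rewrite /multiplicity /= natrD. Qed.

Lemma sum_multiplicity_mul (s : seq T) (F : T -> R) :
  \sum_t multiplicity s t * F t = \sum_(t <- s) F t.
Proof.
elim: s => [|a s IH]; first by rewrite big_nil big1 // => t; rewrite mul0r.
under eq_bigr do rewrite multiplicity_cons mulrDl.
rewrite big_split /= IH big_cons (bigD1 a) //= eqxx mul1r big1 ?addr0 // => t.
by rewrite eq_sym => /negbTE->; rewrite mul0r.
Qed.

End Multiplicity.

Section OptimalTransport.
Variables (R : realType) (X Y : finType).
Implicit Types (u : X -> Y -> R) (rho : {ffun X -> R}) (phi : {ffun Y -> R}).
Implicit Types (g h D : {ffun X * Y -> R}) (s : seq (X * Y)).

Lemma has_marginalsD g h rho rho' phi phi' :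
  has_marginals g rho phi -> has_marginals h rho' phi' ->
  has_marginals (g + h) (rho + rho') (phi + phi').
Proof.
move=> [g_row g_col] [h_row h_col]; split=> z;
  rewrite ffunE -?g_row -?h_row -?g_col -?h_col -big_split;
  by apply: eq_bigr => ? _; rewrite ffunE.
Qed.

Lemma has_marginalsB g h rho rho' phi phi' :
  has_marginals g rho phi -> has_marginals h rho' phi' ->
  has_marginals (g - h) (rho - rho') (phi - phi').
Proof.
move=> [g_row g_col] [h_row h_col]; split=> z;
  rewrite !ffunE -?g_row -?h_row -?g_col -?h_col -sumrB;
  by apply: eq_bigr => ? _; rewrite !ffunE.
Qed.

Lemma has_marginals_sum g rho phi :
  has_marginals g rho phi -> \sum_p g p = \sum_x rho x.
Proof.
move=> [g_row _]; rewrite -(eq_bigr _ (fun x _ => g_row x)) pair_bigA.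
by apply: eq_bigr => -[].
Qed.

Lemma ot_valueD u g h : ot_value u (g + h) = ot_value u g + ot_value u h.
Proof.
by rewrite /ot_value -big_split; apply: eq_bigr => p _; rewrite ffunE mulrDr.
Qed.

Lemma ot_valueB u g h : ot_value u (g - h) = ot_value u g - ot_value u h.
Proof.
by rewrite /ot_value -sumrB; apply: eq_bigr => p _; rewrite !ffunE mulrBr.
Qed.

Lemma sum_multiplicity_row s x :
  \sum_y multiplicity R s (x, y) = multiplicity R (map fst s) x.
Proof.
elim: s => [|[a b] s IH]; first by rewrite big1.
under eq_bigr do rewrite multiplicity_cons.
rewrite big_split /= IH multiplicity_cons; congr (_ + _).
have [<-|neq_ax] := eqVneq a x; last first.
  by rewrite big1 // => y _; rewrite xpair_eqE (negbTE neq_ax).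
rewrite (bigD1 b) //= eqxx big1 ?addr0 // => y.
by rewrite xpair_eqE eqxx eq_sym => /negbTE->.
Qed.

Lemma sum_multiplicity_col s y :
  \sum_x multiplicity R s (x, y) = multiplicity R (map snd s) y.
Proof.
elim: s => [|[a b] s IH]; first by rewrite big1.
under eq_bigr do rewrite multiplicity_cons.
rewrite big_split /= IH multiplicity_cons; congr (_ + _).
have [<-|neq_by] := eqVneq b y; last first.
  by rewrite big1 // => x _; rewrite xpair_eqE (negbTE neq_by) andbF.
rewrite (bigD1 a) //= eqxx big1 ?addr0 // => x.
by rewrite xpair_eqE eqxx andbT eq_sym => /negbTE->.
Qed.

Lemma map_fst_cyc_shift s : map fst (cyc_shift s) = map fst s.
Proof. by apply: unzip1_zip; rewrite size_rot !size_map. Qed.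

Lemma map_snd_cyc_shift s : map snd (cyc_shift s) = rot 1 (map snd s).
Proof. by apply: unzip2_zip; rewrite size_rot !size_map. Qed.

Definition cycle_transfer (e : R) s : {ffun X * Y -> R} :=
  [ffun p => e * (multiplicity R (cyc_shift s) p - multiplicity R s p)].

Lemma cycle_transfer_marginals e s : has_marginals (cycle_transfer e s) 0 0.
Proof.
split=> z; rewrite ffunE; under eq_bigr do rewrite ffunE.
  all: rewrite -mulr_sumr sumrB.
  by rewrite !sum_multiplicity_row map_fst_cyc_shift subrr mulr0.
have /permP rot_count : perm_eq (rot 1 (map snd s)) (map snd s).
  by rewrite perm_rot.
rewrite !sum_multiplicity_col map_snd_cyc_shift /multiplicity rot_count.
by rewrite subrr mulr0.
Qed.

Lemma ot_value_cycle_transfer u e s :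
  ot_value u (cycle_transfer e s) =
  e * (\sum_(p <- cyc_shift s) u p.1 p.2 - \sum_(p <- s) u p.1 p.2).
Proof.
rewrite /ot_value -(sum_multiplicity_mul (cyc_shift s)) -(sum_multiplicity_mul s).
rewrite -sumrB mulr_sumr; apply: eq_bigr => p _; rewrite ffunE; ring.
Qed.

Lemma cycle_transfer_eq0 e s :
  e != 0 -> cycle_transfer e s = 0 -> s =i cyc_shift s.
Proof.
move=> e_neq0 /ffunP C0 p; move: (C0 p); rewrite !ffunE => /eqP.
rewrite mulf_eq0 (negbTE e_neq0) subr_eq0 eqr_nat.
by rewrite -!has_pred1 !has_count => /eqP->.
Qed.

Lemma exists_alternating_cycle D p : has_marginals D 0 0 -> D p != 0 ->
  exists s, [/\ s != [::], uniq (map fst s),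
    {in s, forall q, D q < 0} & {in cyc_shift s, forall q, 0 < D q}].
Proof.
case: p => a b [D_row D_col] Dab_neq0.
pose posY x := odflt b [pick y | 0 < D (x, y)].
pose negX y := odflt a [pick x | D (x, y) < 0].
have posYP x y : D (x, y) < 0 -> 0 < D (x, posY x).
  have row0 : \sum_y D (x, y) = 0 by rewrite D_row ffunE.
  move=> /(exists_gt0_of_sum_eq0 row0) [y' Dy'].
  by rewrite /posY; case: pickP => [//|/(_ y')]; rewrite Dy'.
have negXP x y : 0 < D (x, y) -> D (negX y, y) < 0.
  have col0 : \sum_x D (x, y) = 0 by rewrite D_col ffunE.
  move=> /(exists_lt0_of_sum_eq0 col0) [x' Dx'].
  by rewrite /negX; case: pickP => [//|/(_ x')]; rewrite Dx'.
(* Rows with a positive entry in column [posY x] are stable under [H]; a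
   periodic orbit of [H] among them gives the cycle. *)
pose H x := negX (posY x).
pose N x := 0 < D (x, posY x).
have NH x : N x -> N (H x) by move=> /negXP /posYP.
have [x1 Nx1] : exists x1, N x1.
  case: (ltrgtP (D (a, b)) 0) => [Dab | Dab | Dab].
  - by exists a; apply: posYP Dab.
  - by exists (negX b); apply: posYP (negXP _ _ Dab).
  - by rewrite Dab eqxx in Dab_neq0.
have N_iter n : N (iter n H x1) by elim: n => //= n; apply: NH.
have [i [k [k_gt0 periodic ws_uniq]]] := exists_periodic_iter H x1.
set ws := traject H (iter i H x1) k in ws_uniq.
have N_ws : {in ws, forall w, N w} by move=> _ /trajectP[n _ ->]; rewrite -iterD.
pose s := [seq (H w, posY w) | w <- ws].
have fst_s : map fst s = rot 1 ws.
  by rewrite -map_comp; apply: map_traject_periodic.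
have shift_s : cyc_shift s = rot 1 [seq (w, posY w) | w <- ws].
  rewrite /cyc_shift fst_s -map_comp -(zip_map id posY) map_id.
  by rewrite rot1_zip ?size_map.
exists s; split.
- by rewrite -size_eq0 size_map size_traject -lt0n.
- by rewrite fst_s rot_uniq.
- by move=> _ /mapP[w /N_ws Nw ->]; exact: negXP Nw.
- by rewrite shift_s => q; rewrite mem_rot => /mapP[w /N_ws Nw ->].
Qed.

Section CycleCancelling.
Variables (D : {ffun X * Y -> R}) (s : seq (X * Y)).
Hypotheses (s_neq0 : s != [::]) (s_uniq : uniq (map fst s)).
Hypotheses (D_lt0 : {in s, forall p, D p < 0})
           (D_gt0 : {in cyc_shift s, forall p, 0 < D p}).

Lemma cycle_transfer_uniqE e p :
  cycle_transfer e s p = e * ((p \in cyc_shift s)%:R - (p \in s)%:R).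
Proof.
have t_uniq : uniq (cyc_shift s).
  by apply: (@map_uniq _ _ fst); rewrite map_fst_cyc_shift.
by rewrite ffunE /multiplicity !count_uniq_mem // (map_uniq s_uniq).
Qed.

Let s_mem : exists q, q \in s.
Proof. by case: s s_neq0 => [//|q s'] _; exists q; exact: mem_head. Qed.

Lemma cyc_shift_neq_mem : ~ s =i cyc_shift s.
Proof.
have [q q_s] := s_mem; move=> /(_ q); rewrite q_s => /esym/D_gt0.
by rewrite ltNge ltW ?D_lt0.
Qed.

Lemma exists_cycle_cancelling : exists d : R, [/\ 0 < d,
  (forall p, (D - cycle_transfer d s) p < 0 -> D p < 0) &
  (#|supp (D - cycle_transfer d s)%R| < #|supp D|)%N].
Proof.
have [q q_s] := s_mem.
have q_st : q \in s ++ cyc_shift s by rewrite mem_cat q_s.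
have D_neq0 p : p \in s ++ cyc_shift s -> D p != 0.
  by rewrite mem_cat => /orP[/D_lt0/lt_eqF | /D_gt0/gt_eqF]->.
have [p0 p0_st p0_min] := arg_minP (fun p => `|D p|) q_st.
rewrite -/(p0 \in _) in p0_st.
have {}p0_min p : p \in s ++ cyc_shift s -> `|D p0| <= `|D p| by exact: p0_min.
have D'E p : (D - cycle_transfer `|D p0| s) p =
             D p + `|D p0| * ((p \in s)%:R - (p \in cyc_shift s)%:R).
  by rewrite 2!ffunE cycle_transfer_uniqE; ring.
have notin_shift p : p \in s -> (p \in cyc_shift s) = false.
  by move=> /D_lt0 Dp; apply/negbTE/negP => /D_gt0; rewrite ltNge ltW.
exists `|D p0|; split.
- by rewrite normr_gt0 D_neq0.
- move=> p; rewrite D'E; have [p_s _|p_ns] := boolP (p \in s); first exact: D_lt0.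
  have [p_t|_] := boolP (p \in cyc_shift s); last by rewrite subrr mulr0 addr0.
  have : `|D p0| <= `|D p| by apply: p0_min; rewrite mem_cat p_t orbT.
  rewrite (gtr0_norm (D_gt0 p_t)) /= sub0r mulrN1 subr_lt0.
  by move=> /le_lt_trans/[apply]; rewrite ltxx.
- apply: proper_card; apply/properP; split.
    apply/subsetP => p; rewrite !inE D'E.
    have [/D_neq0 -> //|] := boolP (p \in s ++ cyc_shift s).
    rewrite mem_cat negb_or => /andP[/negbTE-> /negbTE->].
    by rewrite subrr mulr0 addr0.
  exists p0; rewrite !inE ?D_neq0 // D'E negbK.
  move: p0_st; rewrite mem_cat => /orP[p0_s | p0_t].
    by rewrite p0_s notin_shift // ltr0_norm ?D_lt0 // subr0 mulr1 subrr.
  have p0_ns : (p0 \in s) = false by apply: contraTF p0_t => /notin_shift ->.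
  by rewrite p0_ns p0_t gtr0_norm ?D_gt0 // sub0r mulrN1 subrr.
Qed.

End CycleCancelling.

Lemma ot_value_lt0_of_null_marginals u (S : pred (X * Y)) D p :
  strictly_cyc_monotone u S -> has_marginals D 0 0 ->
  (forall q, D q < 0 -> S q) -> D p != 0 -> ot_value u D < 0.
Proof.
move=> scm; have [n] := ubnP #|supp D|; elim: n => // n IH in D p *.
rewrite ltnS => supp_n D_marg D_S Dp.
have [s [s_neq0 s_uniq s_lt0 t_gt0]] := exists_alternating_cycle D_marg Dp.
have [d [d_gt0 D'_lt0 supp_D']] :=
  exists_cycle_cancelling s_neq0 s_uniq s_lt0 t_gt0.
have D'_marg : has_marginals (D - cycle_transfer d s) 0 0.
  by have := has_marginalsB D_marg (cycle_transfer_marginals d s); rewrite !subr0.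
have gain : \sum_(q <- cyc_shift s) u q.1 q.2 < \sum_(q <- s) u q.1 q.2.
  apply: scm; last exact: cyc_shift_neq_mem s_neq0 s_lt0 t_gt0.
  by apply/allP => q /s_lt0 /D_S.
have D'_le0 : ot_value u (D - cycle_transfer d s) <= 0.
  have [q D'q | D'0] := pickP (fun q => (D - cycle_transfer d s) q != 0).
    apply/ltW/(IH _ q) => // [|q' /D'_lt0 /D_S //].
    exact: leq_trans supp_D' supp_n.
  rewrite /ot_value big1 // => q _.
  by move/negbFE/eqP: (D'0 q) => ->; rewrite mulr0.
rewrite -(subrK (cycle_transfer d s) D) ot_valueD ot_value_cycle_transfer.
by rewrite -[X in _ < X](addr0 0) ler_ltD // pmulr_rlt0 // subr_lt0.
Qed.

Lemma ot_value_lt_of_strictly_cyc_monotone u rho phi g g' :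
  ot_feasible rho phi g -> strictly_cyc_monotone u (supp g) ->
  ot_feasible rho phi g' -> g' != g -> ot_value u g' < ot_value u g.
Proof.
move=> [_ g_marg] scm [[g'_ge0 _] g'_marg] g'_neq_g.
have /existsP[p Dp] : [exists p, (g' - g) p != 0].
  apply: contraNT g'_neq_g => /existsPn D0; apply/eqP/ffunP => p.
  by move/negbNE: (D0 p); rewrite !ffunE subr_eq0 => /eqP.
rewrite -subr_lt0 -ot_valueB; apply: ot_value_lt0_of_null_marginals scm _ _ Dp.
  by have := has_marginalsB g'_marg g_marg; rewrite !subrr.
move=> q; rewrite !ffunE subr_lt0 => /(le_lt_trans (g'_ge0 q)) g_gt0.
by rewrite /supp /= gt_eqF.
Qed.

Lemma ot_unique_solution_of_lt u rho phi g :
  ot_feasible rho phi g ->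
  (forall g', ot_feasible rho phi g' -> g' != g ->
     ot_value u g' < ot_value u g) ->
  ot_unique_solution u rho phi g.
Proof.
move=> g_feas g_lt; split.
  by split=> // g' g'_feas; have [->|/(g_lt _ g'_feas)/ltW] := eqVneq g' g.
move=> g' [g'_feas g'_opt]; apply/eqP; apply: contraT => g'_neq_g.
by have := g'_opt g g_feas; rewrite leNgt g_lt.
Qed.

Lemma strictly_cyc_monotone_of_ot_unique_solution u rho phi g :
  ot_unique_solution u rho phi g -> strictly_cyc_monotone u (supp g).
Proof.
move=> [[[[g_ge0 g_sum] g_marg] g_opt] g_uniq] s s_supp s_shift.
rewrite ltNge; apply/negP => no_gain.
pose h p := multiplicity R (cyc_shift s) p - multiplicity R s p.
have g_gt0 p : h p < 0 -> 0 < g p.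
  rewrite subr_lt0 => /(le_lt_trans (ler0n _ _)).
  rewrite ltr0n -has_count has_pred1 => p_s.
  by rewrite lt_def g_ge0 andbT; exact: (allP s_supp).
have [e e_gt0 g'_ge0] := exists_ge0_perturbation g_ge0 g_gt0.
have g'_marg : has_marginals (g + cycle_transfer e s) rho phi.
  by have := has_marginalsD g_marg (cycle_transfer_marginals e s); rewrite !addr0.
have g'_opt : ot_optimal u rho phi (g + cycle_transfer e s).
  split; first split=> //; first split.
  - by move=> p; rewrite !ffunE.
  - by rewrite (has_marginals_sum g'_marg) -(has_marginals_sum g_marg) g_sum.
  move=> g'' /g_opt /le_trans; apply.
  by rewrite ot_valueD ot_value_cycle_transfer lerDl mulr_ge0 ?subr_ge0 // ltW.
apply: s_shift; apply: (cycle_transfer_eq0 (lt0r_neq0 e_gt0)).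
by apply: (addrI g); rewrite addr0 (g_uniq _ g'_opt).
Qed.

End OptimalTransport.

Theorem proposition4 (R : realType) (X Y : finType) (u : X -> Y -> R)
  (rho : {ffun X -> R}) (phi : {ffun Y -> R}) (gamma : {ffun X * Y -> R}) :
  is_dist rho -> is_dist phi -> is_dist gamma -> has_marginals gamma rho phi ->
  (ot_unique_solution u rho phi gamma <->
   strictly_cyc_monotone u (supp gamma)).
Proof.
move=> _ _ gamma_dist gamma_marg.
have gamma_feas : ot_feasible rho phi gamma by split.
split; first exact: strictly_cyc_monotone_of_ot_unique_solution.
move=> scm; apply: (ot_unique_solution_of_lt gamma_feas) => g'.
exact: ot_value_lt_of_strictly_cyc_monotone.
Qed.
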